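(* Suppose $k,m\ge 0$ are integers, $1\le d_1\le\cdots\le d_k$ and $1\le e_1<e_2<\cdots<e_\ell$ are integers, and $$\sum_{i=1}^k(1+2^{-d_i})=m+\sum_{i=1}^\ell 2^{-e_i}.$$ Then $m\ge\ell$. *)

From mathcomp Require Import all_boot all_order all_algebra.
Set Implicit Arguments. Unset Strict Implicit. Unset Printing Implicit Defensive.

(** Multiplying by 2^N for a large N turns the identity into
    [k 2^N + sum_i 2^(N - d_i) = m 2^N + sum_j 2^(N - e_j)], where the exponents
    [N - e_j] are distinct and below N, so the last sum is a binary expansion of a
    number below 2^N.  Hence k <= m.  Modulo 2^N, a sum of k powers of two equals a
    number with l binary ones; since adding powers of two can only merge them by
    carries, l <= k. *)

From mathcomp Require Import all_boot all_order all_algebra.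
From mathcomp Require Import zify.

Set Implicit Arguments.
Unset Strict Implicit.
Unset Printing Implicit Defensive.
Import GRing.Theory Num.Theory.

Definition pow2sum (s : seq nat) : nat := \sum_(x <- s) 2 ^ x.

Definition halve_exps (s : seq nat) : seq nat := [seq x.-1 | x <- s & 0 < x].

Lemma pow2sum_cons x s : pow2sum (x :: s) = 2 ^ x + pow2sum s.
Proof. exact: big_cons. Qed.

Lemma pow2sum_cat s t : pow2sum (s ++ t) = pow2sum s + pow2sum t.
Proof. exact: big_cat. Qed.

Lemma pow2sum_nseq0 n : pow2sum (nseq n 0) = n.
Proof.
elim: n => [|n IHn]; first exact: big_nil.
by rewrite -[nseq _ _]/(0 :: nseq n 0) pow2sum_cons IHn.
Qed.

Lemma pow2sum_halve s : pow2sum s = count_mem 0 s + 2 * pow2sum (halve_exps s).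
Proof.
elim: s => [|[|x] s IHs]; first by rewrite /pow2sum !big_nil.
- by rewrite pow2sum_cons IHs addnA.
- by rewrite /halve_exps /= -/(halve_exps s) !pow2sum_cons IHs expnS add0n mulnDr addnCA.
Qed.

Lemma size_halve_exps s : size s = count_mem 0 s + size (halve_exps s).
Proof.
by elim: s => [|[|x] s IHs] //; rewrite /halve_exps /= -/(halve_exps s) IHs ?addnS.
Qed.

Lemma halve_exps_uniq s : uniq s -> uniq (halve_exps s).
Proof.
move=> us; rewrite map_inj_in_uniq ?filter_uniq // => x y.
by rewrite !mem_filter => /andP[x_gt0 _] /andP[y_gt0 _]; lia.
Qed.

Lemma halve_exps_bounded M s :
  all (fun x => x < M.+1) s -> all (fun x => x < M) (halve_exps s).
Proof.
move=> /allP sM; apply/allP => y /mapP[x]; rewrite mem_filter => /andP[x_gt0 xs] ->.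
by have := sM x xs; lia.
Qed.

Lemma pow2sum_uniq_lt M t :
  uniq t -> all (fun y => y < M) t -> pow2sum t < 2 ^ M.
Proof.
elim: M t => [|M IHM] t ut tM; first by case: t ut tM => // _ _; rewrite /pow2sum big_nil.
have ct : count_mem 0 t <= 1 by rewrite count_uniq_mem ?leq_b1.
have := IHM _ (halve_exps_uniq ut) (halve_exps_bounded tM).
by rewrite (pow2sum_halve t) expnS; lia.
Qed.

Lemma size_le_pow2sum_congr M s t p q :
  uniq t -> all (fun y => y < M) t ->
  pow2sum s + p * 2 ^ M = q * 2 ^ M + pow2sum t -> size t <= size s.
Proof.
elim: M s t p q => [|M IHM] s t p q ut tM eq_st; first by case: t ut tM eq_st.
have ct : count_mem 0 t <= 1 by rewrite count_uniq_mem ?leq_b1.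
set c := count_mem 0 s in eq_st *.
have cs := odd_double_half c; rewrite -muln2 in cs.
have odd_le1 := leq_b1 (odd c).
rewrite (pow2sum_halve s) (pow2sum_halve t) expnS -/c in eq_st.
have parity : odd c = count_mem 0 t :> nat by lia.
(* Pairs of units 2^0 of s carry into c./2 units one level up. *)
have IH : size (halve_exps t) <= c./2 + size (halve_exps s).
  rewrite -(size_nseq c./2 0) -size_cat.
  apply: (IHM _ _ p q (halve_exps_uniq ut) (halve_exps_bounded tM)).
  by rewrite pow2sum_cat pow2sum_nseq0; lia.
by rewrite (size_halve_exps s) (size_halve_exps t) -/c; lia.
Qed.

Local Open Scope ring_scope.

Lemma pow2_mul_invE (R : numFieldType) (N a : nat) :
  (a <= N)%N -> (2 : R) ^+ N * (2 ^+ a)^-1 = (2 ^ (N - a))%:R.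
Proof.
move=> aN; rewrite -{1}(subnK aN) exprD mulfK ?natrX //.
by rewrite expf_neq0 ?pnatr_eq0.
Qed.

Lemma pow2_mul_sum_invE (R : numFieldType) (I : finType) (N : nat) (f : I -> nat) :
  (forall i, f i <= N)%N ->
  (2 : R) ^+ N * \sum_i (2 ^+ f i)^-1 = (pow2sum [seq (N - f i)%N | i : I])%:R.
Proof.
move=> fN; rewrite /pow2sum big_image natr_sum mulr_sumr.
by apply: eq_bigr => i _; rewrite pow2_mul_invE.
Qed.

Theorem mainTheorem8 (k m l : nat) (d : 'I_k -> nat) (e : 'I_l -> nat)
  (hd1 : forall i : 'I_k, (1 <= d i)%N)
  (hdmono : forall i j : 'I_k, (i <= j)%N -> (d i <= d j)%N)
  (he1 : forall i : 'I_l, (1 <= e i)%N)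
  (hemono : forall i j : 'I_l, (i < j)%N -> (e i < e j)%N)
  (heq : \sum_(i < k) (1 + ((2 : rat) ^+ d i)^-1)
         = m%:R + \sum_(i < l) ((2 : rat) ^+ e i)^-1) :
  (l <= m)%N.
Proof.
set N := (\max_i d i + \max_j e j)%N.
have dN i : (d i <= N)%N := leq_trans (leq_bigmax i) (leq_addr _ _).
have eN j : (e j <= N)%N := leq_trans (leq_bigmax j) (leq_addl _ _).
set s := [seq (N - d i)%N | i : 'I_k]; set t := [seq (N - e j)%N | j : 'I_l].
have e_inj : injective e.
  move=> i j eij; apply: val_inj.
  by case: (ltngtP i j) => // /hemono; rewrite eij ltnn.
have ut : uniq t.
  rewrite map_inj_uniq ?enum_uniq // => i j /= eij.
  by apply: e_inj; have := eN i; have := eN j; lia.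
have tN : all (fun y => y < N)%N t.
  by apply/allP => _ /mapP[j _ ->]; have := eN j; have := he1 j; lia.
have E : (pow2sum s + k * 2 ^ N = m * 2 ^ N + pow2sum t)%N.
  apply/eqP; rewrite -(eqr_nat rat) !natrD !natrM natrX.
  rewrite -!pow2_mul_sum_invE // -[_ * 2%:R ^+ N]mulrC -[m%:R * _]mulrC -!mulrDr.
  by rewrite -heq big_split /= sumr_const card_ord addrC.
have k_le_m : (k <= m)%N.
  rewrite -ltnS -(ltn_pmul2r (expn_gt0 2 N)) mulSn.
  by have := pow2sum_uniq_lt ut tN; lia.
have l_le_k : (l <= k)%N.
  by have := size_le_pow2sum_congr ut tN E; rewrite !size_image !card_ord.
exact: leq_trans l_le_k k_le_m.
Qed.
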